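(* Let $X$ be a set strongly star Lindelöf space and $Y$ a compact space such that $X\times Y$ is $T_1$. Then $X\times Y$ is set strongly star Lindelöf.
   Context: For a family $\mathcal U$ of subsets of $Z$ and $A\subseteq Z$, $st(A,\mathcal U)=\bigcup\{U\in\mathcal U: U\cap A\neq\emptyset\}$. A space $Z$ is set strongly star Lindelöf if for every nonempty $A\subseteq Z$ and every family $\mathcal U$ of open subsets of $Z$ with $\overline A\subseteq\bigcup\mathcal U$ there is a countable $F\subseteq\overline A$ with $A\subseteq st(F,\mathcal U)$. *)

From HB Require Import structures.
From mathcomp Require Import all_boot all_order all_algebra.
From mathcomp Require Import all_classical all_reals all_analysis.
Set Implicit Arguments. Unset Strict Implicit. Unset Printing Implicit Defensive.
Local Open Scope classical_set_scope.

Definition star (T : Type) (U : set (set T)) (A : set T) : set T :=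
  \bigcup_(V in [set V | U V /\ V `&` A !=set0]) V.

Definition set_strongly_star_lindelof (T : topologicalType) : Prop :=
  forall (A : set T) (U : set (set T)),
    A !=set0 ->
    (forall V, U V -> open V) ->
    closure A `<=` \bigcup_(V in U) V ->
    exists F : set T, [/\ countable F, F `<=` closure A & A `<=` star U F].

From HB Require Import structures.
From mathcomp Require Import all_boot all_order all_algebra.
From mathcomp Require Import all_classical all_reals all_analysis.
Local Open Scope classical_set_scope.

(* Zorn's lemma gives a maximal subset F of A meeting every member of U in at
   most one point; maximality yields A `<=` st(F, U), and F is closed
   discrete.  By compactness of Y every fiber of F is finite, and by the tube
   lemma the projection D of F to X is closed discrete as well.  The open sets
   of X meeting D in at most one point cover X; applied to D and this cover,
   the hypothesis on X gives a countable G `<=` closure D with D inside the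
   star of G, and the T1 property forces D `<=` G.  Hence F, a countable union
   of finite fibers, is countable. *)

Section separated_sets.
Context {T : topologicalType}.
Implicit Types (U : set (set T)) (A D G S : set T).

Definition separated_by U S := forall V, U V -> is_subset1 (V `&` S).

(* In a T1 space these are exactly the closed discrete sets. *)
Definition locally_subset1 S :=
  forall z : T, exists2 W, nbhs z W & is_subset1 (W `&` S).

Lemma locally_subset1S S' S :
  S' `<=` S -> locally_subset1 S -> locally_subset1 S'.
Proof.
move=> S'S lS z; have [W zW W1] := lS z.
by exists W => // s t [Ws /S'S Ss] [Wt /S'S St]; apply: W1.
Qed.

Lemma separated_locally_subset1 U S : (forall V, U V -> open V) ->
  closure S `<=` \bigcup_(V in U) V -> separated_by U S -> locally_subset1 S.
Proof.
move=> oU clSU sepS z; have [clSz|nclSz] := pselect (closure S z).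
  have [V UV Vz] := clSU _ clSz.
  by exists V; [apply: open_nbhs_nbhs; split => //; exact: oU | exact: sepS].
exists (~` closure S) => [|s t [nclSs Ss]]; last by have := subset_closure Ss.
by apply: open_nbhs_nbhs; split=> //; exact/closed_openC/closed_closure.
Qed.

Lemma accessible_locally_subset1_closed S :
  accessible_space T -> locally_subset1 S -> closed S.
Proof.
move=> T1 lS z clSz; have [W zW W1] := lS z.
have [e [Se We]] := clSz W zW.
have [->//|/eqP ze] := pselect (z = e).
have [N [oN Nz Ne]] := T1 _ _ ze.
have zN : nbhs z N by apply: open_nbhs_nbhs; split => //; exact: set_mem.
have [e' [Se' [We' Ne']]] := clSz _ (filterI zW zN).
by move: Ne; rewrite inE /= -(W1 e' e).
Qed.

Lemma maximal_separated_exists A U : exists F,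
  (F `<=` A /\ separated_by U F) /\
  forall B, F `<` B -> ~ (B `<=` A /\ separated_by U B).
Proof.
apply: Zorn_bigcup => Fam FamS tot; split.
  by move=> p [S FS Sp]; exact: (FamS S FS).1.
move=> V UV s t [Vs [S1 FS1 S1s]] [Vt [S2 FS2 S2t]].
have [S12|S21] := tot _ _ FS1 FS2.
  by apply: (FamS S2 FS2).2 UV _ _ (conj Vs (S12 _ S1s)) (conj Vt S2t).
by apply: (FamS S1 FS1).2 UV _ _ (conj Vs S1s) (conj Vt (S21 _ S2t)).
Qed.

Lemma maximal_separated_star A U F : A `<=` \bigcup_(V in U) V ->
  F `<=` A -> (forall B, F `<` B -> ~ (B `<=` A /\ separated_by U B)) ->
  separated_by U F -> A `<=` star U F.
Proof.
move=> AU FA Fmax sepF a Aa; have [V UV Va] := AU _ Aa.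
have [Fa|nFa] := pselect (F a); first by exists V => //; split => //; exists a.
apply: contrapT => nst; apply: (Fmax (F `|` [set a])).
  split; first by move=> x Fx; left.
  by move=> FaF; apply: nFa; apply: FaF; right.
split; first by move=> x [/FA|->].
move=> W UW s t [Ws [Fs|sa]] [Wt [Ft|ta]]; last by rewrite sa ta.
- exact: (sepF W).
- by case: nst; exists W; [split => //; exists s | rewrite -ta].
- by case: nst; exists W; [split => //; exists t | rewrite -sa].
Qed.

Lemma separated_star_subset U D G : accessible_space T ->
  (forall V, U V -> open V) -> separated_by U D ->
  G `<=` closure D -> D `<=` star U G -> D `<=` G.
Proof.
move=> T1 oU sepD GD DG p Dp; have [W [UW [g [Wg Gg]]] Wp] := DG p Dp.
have [<-//|/eqP gp] := pselect (g = p).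
have [N [oN Ng Np]] := T1 _ _ gp.
have gWN : nbhs g (W `&` N).
  apply: open_nbhs_nbhs; split; first exact: openI (oU _ UW) oN.
  by split => //; exact: set_mem.
have [q [Dq [Wq Nq]]] := GD g Gg _ gWN.
by move: Np; rewrite inE /= -(sepD W UW q p).
Qed.

End separated_sets.

Lemma is_subset1_finite {T : Type} (A : set T) : is_subset1 A -> finite_set A.
Proof.
move=> A1; have [[a Aa]|A0] := pselect (A !=set0).
  by apply: (sub_finite_set _ (finite_set1 a)) => b Ab; exact: A1.
suff -> : A = set0 by exact: finite_set0.
by apply/seteqP; split => // b Ab; apply: A0; exists b.
Qed.

Lemma countable_fiberwise {X Y : Type} (F : set (X * Y)) :
  countable (fst @` F) -> (forall x, finite_set [set y | F (x, y)]) ->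
  countable F.
Proof.
move=> cD fF.
apply: (@sub_countable _ _ _
  (\bigcup_(x in fst @` F) (pair x @` [set y | F (x, y)]))).
  by apply: subset_card_le => -[x y] Fxy; exists x; [exists (x, y) | exists y].
apply: bigcup_countable => // x _.
exact/finite_set_countable/finite_image/fF.
Qed.

Lemma compact_locally_finite {Y : topologicalType} (S : set Y) :
  compact [set: Y] ->
  (forall y : Y, exists2 W, nbhs y W & finite_set (W `&` S)) -> finite_set S.
Proof.
move=> cY lfS.
pose supersets_of_finite :=
  filter_from (@finite_set Y) (fun E => [set B | E `<=` B]).
have filter_sf : Filter supersets_of_finite.
  apply: filter_from_filter; first by exists set0; exact: finite_set0.
  move=> E1 E2 fE1 fE2; exists (E1 `|` E2); first by rewrite finite_setU.
  by move=> B /= EB; split => z Ez; apply: EB; [left|right].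
(* Compactness, as near-covering along this filter, turns finiteness near each
   point into finiteness of S. *)
have [E fE ES] : \forall B \near supersets_of_finite, S `<=` B.
  apply: filterS ((compact_near_coveringP [set: Y]).1 cY _ _
    (fun B y => S y -> B y) filter_sf _) => [B SB y Sy|y _]; first exact: SB.
  have [W yW fWS] := lfS y.
  exists (W, [set B | W `&` S `<=` B]) => //=.
    by split => //; exists (W `&` S).
  by move=> [y' B] [/= Wy' WSB] Sy'; apply: WSB.
exact: sub_finite_set (ES E _) fE.
Qed.

Section product.
Context {X Y : topologicalType}.

Lemma accessible_space_fst (y0 : Y) :
  accessible_space (X * Y)%type -> accessible_space X.
Proof.
move=> T1 x x' /eqP xx'.
have /T1 [W [oW Wx Wx']] : (x, y0) != (x', y0) by apply/eqP => -[].
exists ((fun z => (z, y0)) @^-1` W); split => //.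
move: oW; apply: (continuousP _).1 => z.
by apply: cvg_pair; [exact: cvg_id | exact: cvg_cst].
Qed.

Lemma tube_lemma (C : set (X * Y)) (x : X) : compact [set: Y] -> closed C ->
  (forall y, ~ C (x, y)) -> \forall x' \near x, forall y, ~ C (x', y).
Proof.
move=> cY cC Cx.
apply: filterS ((compact_near_coveringP [set: Y]).1 cY _ _
  (fun x' y => ~ C (x', y)) _ _) => [x' nC y|y _]; first exact: nC.
have : nbhs (x, y) (~` C).
  by apply: open_nbhs_nbhs; split; [exact: closed_openC | exact: Cx].
move=> [[P Q] /= [Px Qy] PQC]; exists (Q, P) => // -[y' x'] [/= Qy' Px'].
exact: (PQC (x', y')).
Qed.

Lemma locally_subset1_fiber_finite (F : set (X * Y)) (x : X) :
  compact [set: Y] -> locally_subset1 F -> finite_set [set y | F (x, y)].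
Proof.
move=> cY lF; apply: compact_locally_finite => // y.
have [W [[P Q] /= [Px Qy] PQW] W1] := lF (x, y).
exists Q => //; apply: is_subset1_finite => s t [Qs Fs] [Qt Ft].
have inW y' : Q y' -> W (x, y').
  by move=> Qy'; apply: PQW; split => //; exact: nbhs_singleton.
by case: (W1 (x, s) (x, t) (conj (inW _ Qs) Fs) (conj (inW _ Qt) Ft)).
Qed.

Lemma locally_subset1_fst (F : set (X * Y)) :
  compact [set: Y] -> accessible_space (X * Y)%type ->
  locally_subset1 F -> locally_subset1 (fst @` F).
Proof.
move=> cY T1 lF x.
pose C := [set f | F f /\ f.1 <> x].
have cC : closed C.
  apply: accessible_locally_subset1_closed T1 _.
  by apply: locally_subset1S lF => f [].
have onto_x x' y : (forall y, ~ C (x', y)) -> F (x', y) -> x' = x.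
  by move=> nC Fx'y; apply: contrapT => x'x; exact: (nC y).
exists [set x' | forall y, ~ C (x', y)]; first by apply: tube_lemma => // y [].
move=> s t [nCs [[x1 y1] F1 /= x1s]] [nCt [[x2 y2] F2 /= x2t]]; subst s t.
by rewrite (onto_x x1 y1 nCs F1) (onto_x x2 y2 nCt F2).
Qed.

End product.

Lemma locally_subset1_countable (T : topologicalType) (D : set T) :
  set_strongly_star_lindelof T -> accessible_space T -> locally_subset1 D ->
  countable D.
Proof.
move=> sslT T1 lD; have [D0|/set0P/negP] := pselect (D !=set0); last first.
  by rewrite negbK => /eqP ->.
pose U := [set V : set T | open V /\ is_subset1 (V `&` D)].
have oU : forall V, U V -> open V by move=> V [].
have [|G [cG GD DG]] := sslT D U D0 oU.
  move=> z _; have [W] := lD z; rewrite nbhsE => -[V [oV Vz] VW] W1.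
  exists V => //; split => // s t [Vs Ds] [Vt Dt].
  by apply: W1; split => //; exact: VW.
apply: sub_countable cG; apply: subset_card_le.
by apply: separated_star_subset T1 oU _ GD DG => V [].
Qed.

Theorem proposition3p2 (X Y : topologicalType) :
  set_strongly_star_lindelof X ->
  compact [set: Y] ->
  accessible_space (X * Y)%type ->
  set_strongly_star_lindelof (X * Y)%type.
Proof.
move=> sslX cY T1 A U [a Aa] oU clAU.
have [F [[FA sepF] maxF]] := maximal_separated_exists A U.
have lF : locally_subset1 F.
  exact: separated_locally_subset1 oU (subset_trans (closureS FA) clAU) sepF.
exists F; split.
- apply: countable_fiberwise => [|x]; last exact: locally_subset1_fiber_finite.
  apply: locally_subset1_countable sslX (accessible_space_fst a.2 T1) _.
  exact: locally_subset1_fst.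
- exact: subset_trans FA (@subset_closure _ A).
- apply: maximal_separated_star FA maxF sepF.
  exact: subset_trans (@subset_closure _ A) clAU.
Qed.
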